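(* Let $(D,\theta)$ be a finite-dimensional division algebra with involution of the first kind over a field $F$, let $\lambda=\pm1$, and let $(V,h)$ be an even $\lambda$-hermitian space over $(D,\theta)$. Suppose that either $D\neq F$ or $\lambda\neq-1$. If $h$ is regular, then for every $F$-basis $\mathcal{B}$ of $\mathrm{Symd}_\lambda(D,\theta)$ the system of quadratic forms $q_{h,\mathcal{B}}$ is totally regular.
   Context: The field $F$ has arbitrary characteristic. An involution of the first kind on $D$ is an $F$-linear antiautomorphism of order $2$. $\mathrm{Symd}_\lambda(D,\theta)=\{x+\lambda\theta(x)\mid x\in D\}$. A $\lambda$-hermitian space $(V,h)$ consists of a finite-dimensional right $D$-vector space $V$ and a bi-additive map $h:V\times V\to D$ with $h(u\alpha,v\beta)=\theta(\alpha)h(u,v)\beta$ and $h(v,u)=\lambda\theta(h(u,v))$; $h$ is regular if no nonzero $v$ satisfies $h(v,w)=0$ for all $w\in V$, and even if $h(v,v)\in\mathrm{Symd}_\lambda(D,\theta)$ for all $v\in V$. For an $F$-basis $\mathcal{B}=\{u_1,\dots,u_n\}$ of $\mathrm{Symd}_\lambda(D,\theta)$ with dual basis $\pi_1,\dots,\pi_n$, $q_{h,\mathcal{B}}=(q^{u_1}_{h,\mathcal{B}},\dots,q^{u_n}_{h,\mathcal{B}}):V\to F^n$ with $q^{u_i}_{h,\mathcal{B}}(v)=\pi_i(h(v,v))$, where $V$ is viewed as an $F$-vector space; each component is a quadratic form over $F$. A quadratic form $q$ is regular if no nonzero $v$ satisfies $q(v+w)-q(v)-q(w)=0$ for all $w$;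 a system $(q_1,\dots,q_n)$ is totally regular if every $q_i$ is regular. *)

From HB Require Import structures.
From mathcomp Require Import all_boot all_order all_algebra all_field.
Set Implicit Arguments. Unset Strict Implicit. Unset Printing Implicit Defensive.
Import GRing.Theory.
Local Open Scope ring_scope.

Section Defs.
Variables (F : fieldType) (D : falgType F).

Definition division_algebra : Prop := forall x : D, x != 0 -> x \is a GRing.unit.

Definition involution_first_kind (theta : D -> D) : Prop :=
  [/\ forall x y : D, theta (x + y) = theta x + theta y,
      forall (c : F) (x : D), theta (c *: x) = c *: theta x,
      forall x y : D, theta (x * y) = theta y * theta x,
      theta 1 = 1
    & forall x : D, theta (theta x) = x].

Definition in_Symd (theta : D -> D) (lam : D) (x : D) : Prop :=
  exists y : D, x = y + lam * theta y.

Definition right_Dspace (V : vectType F) (act : V -> D -> V) : Prop :=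
  [/\ forall (u v : V) (a : D), act (u + v) a = act u a + act v a,
      forall (v : V) (a b : D), act v (a + b) = act v a + act v b,
      forall (v : V) (a b : D), act v (a * b) = act (act v a) b,
      forall v : V, act v 1 = v
    & forall (v : V) (c : F), act v (c%:A) = c *: v].

Definition hermitian_form (V : vectType F) (act : V -> D -> V)
    (theta : D -> D) (lam : D) (h : V -> V -> D) : Prop :=
  [/\ forall u u' v : V, h (u + u') v = h u v + h u' v,
      forall u v v' : V, h u (v + v') = h u v + h u v',
      forall (u v : V) (a b : D), h (act u a) (act v b) = theta a * h u v * b
    & forall u v : V, h v u = lam * theta (h u v)].

Definition hermitian_regular (V : vectType F) (h : V -> V -> D) : Prop :=
  forall v : V, (forall w : V, h v w = 0) -> v = 0.

Definition hermitian_even (V : vectType F) (theta : D -> D) (lam : D)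
    (h : V -> V -> D) : Prop :=
  forall v : V, in_Symd theta lam (h v v).

Definition Symd_basis (theta : D -> D) (lam : D) n (B : n.-tuple D) : Prop :=
  free B /\ (forall x : D, x \in <<B>>%VS <-> in_Symd theta lam x).

Definition qhB (V : vectType F) (h : V -> V -> D) n (B : n.-tuple D)
    (i : 'I_n) (v : V) : F := coord B i (h v v).

End Defs.

Definition qf_regular (F : fieldType) (V : vectType F) (q : V -> F) : Prop :=
  forall v : V, (forall w : V, q (v + w) - q v - q w = 0) -> v = 0.

Definition totally_regular (F : fieldType) (V : vectType F) n
    (qs : 'I_n -> V -> F) : Prop :=
  forall i : 'I_n, qf_regular (qs i).

From mathcomp Require Import all_boot all_order all_algebra all_field.
Set Implicit Arguments. Unset Strict Implicit. Unset Printing Implicit Defensive.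
Local Open Scope ring_scope.
Import GRing.Theory.

(* The polar form of the component q_i is (v, w) |-> pi_i (h(v,w) + lam theta(h(v,w))).
   If v is nonzero, regularity of h gives w0 with d := h(v,w0) != 0, and then
   w := w0 (d^-1 y) satisfies h(v,w) = y for any prescribed y.  Choosing y with
   y + lam theta(y) = u_i makes the polar form take the value pi_i(u_i) = 1, so v
   is not in the radical of q_i. *)

Section HermitianForm.
Variables (F : fieldType) (D : falgType F) (theta : D -> D) (lam : D).
Variables (V : vectType F) (act : V -> D -> V) (h : V -> V -> D).
Hypothesis hform : hermitian_form act theta lam h.

Lemma hermitian_polar (u v : V) :
  h (u + v) (u + v) - h u u - h v v = h u v + lam * theta (h u v).
Proof.
case: hform => hDl hDr _ hsym.
rewrite hDl !hDr (hsym u v) -addrA -opprD [_ + h v v]addrC.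
by rewrite addrACA addrC addKr.
Qed.

Lemma qhB_polar n (B : n.-tuple D) (i : 'I_n) (u v : V) :
  qhB h B i (u + v) - qhB h B i u - qhB h B i v
    = coord B i (h u v + lam * theta (h u v)).
Proof. by rewrite /qhB -!raddfB /= hermitian_polar. Qed.

Hypothesis theta1 : theta 1 = 1.
Hypothesis act1 : forall v : V, act v 1 = v.

Lemma hermitian_actr (u v : V) (a : D) : h u (act v a) = h u v * a.
Proof. by case: hform => _ _ hact _; rewrite -{1}(act1 u) hact theta1 mul1r. Qed.

Lemma hermitian_onto (u w0 : V) :
  division_algebra D -> h u w0 != 0 -> forall y : D, exists w : V, h u w = y.
Proof.
move=> Ddiv /Ddiv hu_unit y; exists (act w0 ((h u w0)^-1 * y)).
by rewrite hermitian_actr mulVKr.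
Qed.

End HermitianForm.

Lemma Symd_basis_mem (F : fieldType) (D : falgType F) (theta : D -> D) (lam : D)
    n (B : n.-tuple D) (i : 'I_n) :
  Symd_basis theta lam B -> in_Symd theta lam B`_i.
Proof. by case=> _ BS; apply/BS/memv_span/mem_nth; rewrite size_tuple. Qed.

Theorem proposition4p1 (F : fieldType) (D : falgType F)
    (theta : D -> D) (lam : D) (V : vectType F) (act : V -> D -> V)
    (h : V -> V -> D) :
  division_algebra D ->
  involution_first_kind theta ->
  (lam = 1 \/ lam = -1) ->
  right_Dspace act ->
  hermitian_form act theta lam h ->
  hermitian_even theta lam h ->
  ((\dim (fullv : {vspace D}) != 1)%N \/ lam != -1) ->
  hermitian_regular h ->
  forall (n : nat) (B : n.-tuple D), Symd_basis theta lam B ->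
  totally_regular (qhB h B).
Proof.
move=> Ddiv [_ _ _ theta1 _] _ [_ _ _ act1 _] hform _ _ hreg n B BSymd i v polar0.
apply: hreg => w0; apply/eqP/negbNE/negP => hvw0.
have [y By] := Symd_basis_mem i BSymd.
have [w hvw] := hermitian_onto hform theta1 act1 Ddiv hvw0 y.
have := polar0 w.
rewrite (qhB_polar hform) hvw -By coord_free ?eqxx; last exact: BSymd.1.
by move/eqP; rewrite oner_eq0.
Qed.
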